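(* The class $\mathrm{Age}(C_3[I_\omega]^* )$ has the Ramsey property.
   Context: For relational structures $\mathbf A,\mathbf B$ in the same language, $\binom{\mathbf B}{\mathbf A}$ denotes the set of substructures of $\mathbf B$ isomorphic to $\mathbf A$. For $k\ge 1$, $\mathbf C\to(\mathbf B)^{\mathbf A}_k$ means: for every map $c:\binom{\mathbf C}{\mathbf A}\to[k]=\{0,\dots,k-1\}$ there is $\mathbf B'\in\binom{\mathbf C}{\mathbf B}$ such that $c$ is constant on $\binom{\mathbf B'}{\mathbf A}$. A class $\mathcal K$ of finite structures has the Ramsey property if for all $k\ge1$ and all $\mathbf A,\mathbf B\in\mathcal K$ there is $\mathbf C\in\mathcal K$ with $\mathbf C\to(\mathbf B)^{\mathbf A}_k$. The age of a structure is the class of finite structures embeddable in it. $C_3$ is the directed 3-cycle on $[3]=\{0,1,2\}$ with edges $(0,1),(1,2),(2,0)$. Fix a linear order $\prec$ on $\mathbb N$ with $(\mathbb N,\prec)\cong(\mathbb Q,<)$. $C_3[I_\omega]^*$ is the structure with universe $[3]\times\mathbb N$ in the language $\{E,P_0,P_1,P_2,<\}$ where $E((i,a),(j,b))$ iff $(i,j)$ is an edge of $C_3$; $P_i=\{i\}\times\mathbb N$; and $(i,a)<(j,b)$ iff $i<j$, or $i=j$ and $a\prec b$. *)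

From HB Require Import structures.
From mathcomp Require Import all_boot all_order all_algebra.
Set Implicit Arguments. Unset Strict Implicit. Unset Printing Implicit Defensive.

(* Finite structures in the language {E, P_0, P_1, P_2, <}:
   E and < binary, P_i unary (indexed by i : 'I_3). *)
Record fstr := FStr {
  car :> finType;
  relE : rel car;
  relP : 'I_3 -> pred car;
  relL : rel car }.

Definition is_emb (A B : fstr) (f : A -> B) : Prop :=
  injective f /\
  (forall x y, @relE B (f x) (f y) = @relE A x y) /\
  (forall i x, @relP B i (f x) = @relP A i x) /\
  (forall x y, @relL B (f x) (f y) = @relL A x y).

Definition is_copy (A C : fstr) (S : {set C}) : Prop :=
  exists f : A -> C, is_emb f /\ S = [set f x | x in A].

Definition arrows (C B A : fstr) (k : nat) : Prop :=
  forall c : {set C} -> 'I_k,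
    exists B' : {set C}, is_copy B B' /\
      forall S1 S2 : {set C}, is_copy A S1 -> S1 \subset B' ->
                              is_copy A S2 -> S2 \subset B' -> c S1 = c S2.

Definition ramsey_property (K : fstr -> Prop) : Prop :=
  forall k : nat, 1 <= k ->
  forall A B : fstr, K A -> K B -> exists C : fstr, K C /\ arrows C B A k.

(* The structure C_3[I_omega]^star, universe 'I_3 * nat, with a parameter prec
   (the fixed linear order on nat of type (Q,<)). *)
Definition c3E (u v : 'I_3 * nat) : Prop :=
  (val u.1 == 0 /\ val v.1 == 1) \/ (val u.1 == 1 /\ val v.1 == 2)
  \/ (val u.1 == 2 /\ val v.1 == 0).
Definition c3P (i : 'I_3) (u : 'I_3 * nat) : Prop := u.1 = i.
Definition c3L (prec : nat -> nat -> Prop) (u v : 'I_3 * nat) : Prop :=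
  (val u.1 < val v.1) \/ (u.1 = v.1 /\ prec u.2 v.2).

Definition emb_C3 (prec : nat -> nat -> Prop) (A : fstr) (f : A -> 'I_3 * nat) : Prop :=
  injective f /\
  (forall x y, c3E (f x) (f y) <-> @relE A x y) /\
  (forall i x, c3P i (f x) <-> @relP A i x) /\
  (forall x y, c3L prec (f x) (f y) <-> @relL A x y).

Definition age_C3 (prec : nat -> nat -> Prop) (A : fstr) : Prop :=
  exists f : A -> 'I_3 * nat, emb_C3 prec f.

Definition iso_to_Q (prec : nat -> nat -> Prop) : Prop :=
  exists h : nat -> rat, bijective h /\ forall a b, prec a b <-> (h a < h b)%R.

From mathcomp Require Import all_boot all_order all_algebra.
Set Implicit Arguments. Unset Strict Implicit. Unset Printing Implicit Defensive.
Import Order.TTheory Num.Theory.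

(* An element of C_3[I_omega]^* is determined by its part i and its position
   in the dense chain P_i; edges depend only on the parts and the order is
   lexicographic.  So a finite structure of the age is just three finite
   chains, and a copy of A inside a three-chain structure C is exactly a
   subset of C with #|A_i| elements in each part P_i (copy_slice_card and
   copy_of_slices, the latter matching elements of equal rank).  The Ramsey
   property thus reduces to the product Ramsey theorem for three factors. *)

Section Homogeneous.
Variables (U : finType) (T : Type).

Definition homogeneous (c : {set U} -> T) (r : nat) (Y : {set U}) : Prop :=
  forall X1 X2 : {set U}, X1 \subset Y -> #|X1| = r ->
    X2 \subset Y -> #|X2| = r -> c X1 = c X2.

(* A homogeneous set has a well-defined colour (c set0 if there are no r-sets). *)
Lemma homogeneous_colour (c : {set U} -> T) r (Y : {set U}) :
  homogeneous c r Y ->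
  exists t, forall X : {set U}, X \subset Y -> #|X| = r -> c X = t.
Proof.
move=> homY.
case: (pickP [pred X : {set U} | (X \subset Y) && (#|X| == r)]) => [X0 /andP[sX0 /eqP cX0]|none].
  by exists (c X0) => X sX cX; apply: homY.
by exists (c set0) => X sX cX; move: (none X); rewrite /= sX cX eqxx.
Qed.

End Homogeneous.

Lemma subset_of_card (U : finType) (Y : {set U}) m :
  m <= #|Y| -> exists2 Z : {set U}, Z \subset Y & #|Z| = m.
Proof.
move=> le_mY; exists [set x in take m (enum Y)].
  by apply/subsetP => x; rewrite inE => /mem_take; rewrite mem_enum.
by rewrite cardsE (card_uniqP (take_uniq _ (enum_uniq _))) size_takel -?cardE.
Qed.

Lemma pigeonhole (X : Type) (T : finType) (col : X -> T) (s : seq X) m :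
  #|T| * m < size s -> exists t, m < count (fun x => col x == t) s.
Proof.
have sum_count : \sum_(t : T) count (fun x => col x == t) s = size s.
  elim: s => [|x s IH] /=; first by rewrite big1.
  rewrite big_split /= IH (bigD1 (col x)) //= eqxx big1 ?add1n ?addn0 // => t.
  by rewrite eq_sym => /negbTE ->.
move=> lt_s; apply/existsP.
case: (boolP [exists t, m < count (fun x => col x == t) s]) => //.
rewrite negb_exists => /forallP small; move: lt_s; rewrite -sum_count -sum_nat_const.
by rewrite ltnNge leq_sum // => t _; rewrite leqNgt small.
Qed.

Definition ramsey_bound (T : finType) (r m n : nat) : Prop :=
  forall (U : finType) (D : {set U}) (c : {set U} -> T), n <= #|D| ->
  exists2 Y : {set U}, Y \subset D & #|Y| = m /\ homogeneous c r Y.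

Section EndHomogeneous.
Variables (U : finType) (T : eqType) (c : {set U} -> T) (r : nat).

Fixpoint end_homogeneous (s : seq (U * T)) : Prop :=
  if s is p :: s' then
    [/\ p.1 \notin unzip1 s',
        forall X : {set U}, X \subset [set y in unzip1 s'] -> #|X| = r ->
          c (p.1 |: X) = p.2
      & end_homogeneous s']
  else True.

Lemma end_homogeneous_uniq s : end_homogeneous s -> uniq (unzip1 s).
Proof. by elim: s => //= p s IH [-> _ /IH]. Qed.

Lemma end_homogeneous_filter s t :
  end_homogeneous s -> end_homogeneous [seq p <- s | p.2 == t].
Proof.
have sub s' : {subset unzip1 [seq p <- s' | p.2 == t] <= unzip1 s'}.
  exact/mem_subseq/map_subseq/filter_subseq.
elim: s => //= p s IH [p_new p_hom /IH s_hom].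
case: ifP => _ //=; split=> // [|X sX]; first by apply: contra p_new; apply: sub.
apply: p_hom; apply: subset_trans sX _; apply/subsetP => y; rewrite !inE; exact: sub.
Qed.

(* If all the colours t_i equal t, every (r+1)-set of points gets colour t:
   its first point x_i determines its colour t_i. *)
Lemma end_homogeneous_mono s t :
  end_homogeneous s -> all (fun p => p.2 == t) s ->
  forall Z : {set U}, Z \subset [set y in unzip1 s] -> #|Z| = r.+1 -> c Z = t.
Proof.
elim: s => [|p s IH] /= => [_ _ Z sZ cZ|[p_new p_hom s_hom] /andP[/eqP pt all_t] Z sZ cZ].
  have Z0 : Z = set0 by apply/eqP; rewrite -subset0; apply: subset_trans sZ _;
    apply/subsetP => y; rewrite inE.
  by rewrite Z0 cards0 in cZ.
have sZs y : y \in Z -> y != p.1 -> y \in unzip1 s.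
  by move=> yZ; have := subsetP sZ y yZ; rewrite !inE => /orP[->|].
case: (boolP (p.1 \in Z)) => pZ.
  rewrite -(setD1K pZ) p_hom -?pt //; last by move: cZ; rewrite (cardsD1 p.1) pZ => -[].
  by apply/subsetP => y; rewrite !inE => /andP[yp yZ]; apply: sZs.
apply: IH => //; apply/subsetP => y yZ; rewrite inE sZs //.
by apply: contraNneq pZ => <-.
Qed.

End EndHomogeneous.

(* From Ramsey bounds for r-sets, arbitrarily long end-homogeneous sequences
   for (r+1)-sets: pick x, make D :\ x homogeneous for X |-> c (x |: X), recurse. *)
Lemma end_homogeneous_exists (T : finType) r :
  (forall m, exists n, ramsey_bound T r m n) ->
  forall L, exists n, forall (U : finType) (D : {set U}) (c : {set U} -> T),
    n <= #|D| -> exists s : seq (U * T),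
      [/\ size s = L, {subset unzip1 s <= D} & end_homogeneous c r s].
Proof.
move=> ramsey_r; elim=> [|L [n Hn]]; first by exists 0 => U D c _; exists [::].
have [n' Hn'] := ramsey_r n.
exists n'.+1 => U D c lt_n'D.
have [x xD] : exists x, x \in D.
  by apply/set0Pn; rewrite -card_gt0 (leq_ltn_trans _ lt_n'D).
have le_n'Dx : n' <= #|D :\ x| by move: lt_n'D; rewrite (cardsD1 x D) xD.
have [Y sYDx [cY homY]] := Hn' U (D :\ x) (fun X => c (x |: X)) le_n'Dx.
have [t Ht] := homogeneous_colour homY.
have [s [size_s sY hom_s]] := Hn U Y c (eq_leq (esym cY)).
have sDx y : y \in unzip1 s -> y \in D :\ x by move/sY; apply: (subsetP sYDx).
exists ((x, t) :: s); split=> /=; first by rewrite size_s.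
  by move=> y; rewrite inE => /orP[/eqP -> //|/sDx]; rewrite inE => /andP[].
split=> // [|X sX cX]; first by apply/negP => /sDx; rewrite !inE eqxx.
apply: Ht cX; apply: subset_trans sX _; apply/subsetP => y; rewrite inE; exact: sY.
Qed.

Theorem finite_ramsey (T : finType) r m : exists n, ramsey_bound T r m n.
Proof.
elim: r m => [|r IHr] m.
  exists m => U D c le_mD; have [Y sYD cY] := subset_of_card le_mD.
  exists Y => //; split=> // X1 X2 _ /eqP + _ /eqP.
  by rewrite !cards_eq0 => /eqP -> /eqP ->.
have [n Hn] := end_homogeneous_exists IHr (#|T| * m).+1.
exists n => U D c le_nD; have [s [size_s sD hom_s]] := Hn U D c le_nD.
have [|t lt_m] := @pigeonhole _ _ snd s m; first by rewrite size_s.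
set s' := [seq p <- s | p.2 == t].
have hom_s' : end_homogeneous c r s' by apply: end_homogeneous_filter.
have sub_s' : {subset unzip1 s' <= unzip1 s}.
  exact/mem_subseq/map_subseq/filter_subseq.
have [|Y sY cY] := @subset_of_card _ [set y in unzip1 s'] m.
  rewrite cardsE (card_uniqP (end_homogeneous_uniq hom_s')) size_map size_filter.
  exact: ltnW.
exists Y; first by apply/subsetP => y /(subsetP sY); rewrite inE => /sub_s'/sD.
split=> // X1 X2 s1 c1 s2 c2.
by rewrite !(end_homogeneous_mono hom_s' (filter_all _ _) (subset_trans _ sY)).
Qed.

(* Ramsey for families of colourings indexed by a finite set V: one set Y is
   homogeneous for every c v, obtained by colouring with the whole family. *)
Lemma fibrewise_ramsey (V T : finType) r m : exists n,
  forall c : V -> {set 'I_n} -> T, exists2 Y : {set 'I_n}, #|Y| = m &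
    exists F : V -> T, forall v (X : {set 'I_n}), X \subset Y -> #|X| = r ->
      c v X = F v.
Proof.
have [n Hn] := finite_ramsey {ffun V -> T} r m.
exists n => c.
have [|Y _ [cY homY]] := Hn _ setT (fun X => [ffun v => c v X]).
  by rewrite cardsT card_ord.
exists Y => //; have [F HF] := homogeneous_colour homY.
by exists F => v X sX cX; rewrite -(HF X sX cX) ffunE.
Qed.

Lemma product_ramsey (T : finType) (a0 a1 a2 b0 b1 b2 : nat) : exists n0 n1 n2,
  forall c : {set 'I_n0} -> {set 'I_n1} -> {set 'I_n2} -> T,
  exists (Y0 : {set 'I_n0}) (Y1 : {set 'I_n1}) (Y2 : {set 'I_n2}),
    [/\ #|Y0| = b0, #|Y1| = b1, #|Y2| = b2 &
    exists t, forall (X0 : {set 'I_n0}) (X1 : {set 'I_n1}) (X2 : {set 'I_n2}),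
      X0 \subset Y0 -> #|X0| = a0 ->
      X1 \subset Y1 -> #|X1| = a1 -> X2 \subset Y2 -> #|X2| = a2 ->
      c X0 X1 X2 = t].
Proof.
have [n0 H0] := fibrewise_ramsey unit T a0 b0.
have [n1 H1] := fibrewise_ramsey {set 'I_n0} T a1 b1.
have [n2 H2] := fibrewise_ramsey ({set 'I_n0} * {set 'I_n1})%type T a2 b2.
exists n0, n1, n2 => c.
have [Y2 cY2 [F2 HF2]] := H2 (fun v X2 => c v.1 v.2 X2).
have [Y1 cY1 [F1 HF1]] := H1 (fun X0 X1 => F2 (X0, X1)).
have [Y0 cY0 [F0 HF0]] := H0 (fun _ X0 => F1 X0).
exists Y0, Y1, Y2; split=> //; exists (F0 tt) => X0 X1 X2 *.
by rewrite (HF2 (X0, X1)) // HF1 // (HF0 tt).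
Qed.

Section ChainRank.
Variables (X : finType) (d : Order.disp_t) (O : orderType d) (key : X -> O).
Variable P : {set X}.
Hypothesis key_inj : {in P &, injective key}.

(* The rank of x in the finite chain (P, key): the number of elements of P
   strictly below x.  Ranks identify any two chains of the same size. *)
Definition chain_rank (x : X) : nat := #|[set y in P | (key y < key x)%O]|.

Lemma chain_rank_bound x : x \in P -> chain_rank x < #|P|.
Proof.
move=> xP; apply: proper_card; apply/properP; split.
  by apply/subsetP => y; rewrite inE => /andP[].
by exists x => //; rewrite inE ltxx andbF.
Qed.

Lemma chain_rank_lt : {in P &, forall x y, (chain_rank x < chain_rank y) = (key x < key y)%O}.
Proof.
have mono x y : x \in P -> (key x < key y)%O -> chain_rank x < chain_rank y.
  move=> xP lt_xy; apply: proper_card; apply/properP; split.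
    by apply/subsetP => z; rewrite !inE => /andP[-> /lt_trans->].
  by exists x; rewrite !inE ?xP ?lt_xy ?ltxx.
move=> x y xP yP; case: (ltgtP (key x) (key y)) => [lt_xy|lt_yx|eq_xy].
- exact: mono.
- by apply/negbTE; rewrite -leqNgt ltnW // mono.
- by rewrite (key_inj xP yP eq_xy) ltnn.
Qed.

Lemma chain_rank_inj : {in P &, injective chain_rank}.
Proof.
move=> x y xP yP eq_r; apply: key_inj => //.
case: (ltgtP (key x) (key y)) => // lt.
  by move: (chain_rank_lt xP yP); rewrite lt eq_r ltnn.
by move: (chain_rank_lt yP xP); rewrite lt eq_r ltnn.
Qed.

Lemma chain_rank_onto i : i < #|P| -> exists2 x, x \in P & chain_rank x = i.
Proof.
move=> lt_iP.
have [|||_ same] := @uniq_min_size _ [seq chain_rank x | x <- enum P] (iota 0 #|P|).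
- rewrite map_inj_in_uniq ?enum_uniq // => x y; rewrite !mem_enum.
  exact: chain_rank_inj.
- move=> k /mapP[x]; rewrite mem_enum => xP ->.
  by rewrite mem_iota chain_rank_bound.
- by rewrite size_map size_iota -cardE.
have : i \in [seq chain_rank x | x <- enum P] by rewrite same mem_iota.
by case/mapP => x; rewrite mem_enum => xP ->; exists x.
Qed.

End ChainRank.

Definition c3Eb (i j : 'I_3) : bool :=
  [|| (val i == 0) && (val j == 1), (val i == 1) && (val j == 2)
    | (val i == 2) && (val j == 0)].

Lemma c3EP (u v : 'I_3 * nat) : c3E u v <-> c3Eb u.1 v.1.
Proof.
rewrite /c3E /c3Eb; split.
  by case=> [[-> ->]|[[-> ->]|[-> ->]]]; rewrite ?orbT.
by case/or3P => /andP[-> ->]; [left|right; left|right; right].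
Qed.

Lemma c3LP (prec : nat -> nat -> Prop) (lt : rel nat) (u v : 'I_3 * nat) :
  (forall a b, prec a b <-> lt a b) ->
  c3L prec u v <-> (u.1 < v.1) || (u.1 == v.1) && lt u.2 v.2.
Proof.
move=> precE; rewrite /c3L; split.
  by case=> [->//|[-> /precE ->]]; rewrite eqxx orbT.
by case/orP => [|/andP[/eqP e /precE]]; [left|right].
Qed.

Definition slice (A : fstr) (S : {set A}) (i : 'I_3) : {set A} :=
  [set x in S | relP i x].

Section AgeStructure.
Variables (prec : nat -> nat -> Prop) (h : nat -> rat).
Hypothesis h_inj : injective h.
Hypothesis precE : forall a b, prec a b <-> (h a < h b)%R.
Variables (A : fstr) (fA : A -> 'I_3 * nat).
Hypothesis fA_emb : emb_C3 prec fA.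

Lemma age_relE x y : relE x y = c3Eb (fA x).1 (fA y).1.
Proof.
case: fA_emb => _ [fE _].
by apply/idP/idP => [/(fE x y) /c3EP | /(c3EP (fA x) (fA y)) /(fE x y)].
Qed.

Lemma age_relP i x : relP i x = ((fA x).1 == i).
Proof. by case: fA_emb => _ [_ [fP _]]; apply/idP/eqP => /(fP i x). Qed.

Lemma age_relL x y :
  relL x y = ((fA x).1 < (fA y).1) || ((fA x).1 == (fA y).1) && (h (fA x).2 < h (fA y).2)%R.
Proof.
case: fA_emb => _ [_ [_ fL]].
by apply/idP/idP => [/(fL x y) /(c3LP _ _ precE) | /(c3LP _ _ precE) /(fL x y)].
Qed.

Lemma age_slice x : x \in slice [set: A] (fA x).1.
Proof. by rewrite !inE /= age_relP. Qed.

Lemma age_key_inj i : {in slice [set: A] i &, injective (fun x => h (fA x).2)}.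
Proof.
case: fA_emb => fA_inj _ x y; rewrite !inE !age_relP => /eqP ex /eqP ey /h_inj e2.
by apply: fA_inj; rewrite [fA x]surjective_pairing [fA y]surjective_pairing ex ey e2.
Qed.

End AgeStructure.

Section ThreeChains.
Variables (X : finType) (part : X -> 'I_3) (pos : X -> nat).
Hypothesis part_pos_inj : injective (fun x => (part x, pos x)).

Definition chains3 : fstr :=
  @FStr X (fun x y => c3Eb (part x) (part y)) (fun i x => part x == i)
    (fun x y => (part x < part y) || (part x == part y) && (pos x < pos y)).

(* chains3 lies in the age: send the element at position n of part i to
   (i, g n), where g n is the preimage of the rational n under (nat, prec) ~ Q. *)
Lemma chains3_in_age prec : iso_to_Q prec -> age_C3 prec chains3.
Proof.
case=> h [[h' hK h'K] precE].
pose g n := h' n%:R%R.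
have hg n : h (g n) = n%:R%R by rewrite /g h'K.
exists (fun x => (part x, g (pos x))); split=> [x y [ep /(congr1 h)]|].
  by rewrite !hg => /eqP; rewrite eqr_nat => /eqP e; apply: part_pos_inj; rewrite /= ep e.
split=> [x y|]; first exact: c3EP.
split=> [i x|x y]; first by rewrite /c3P /=; split=> [->|/eqP].
by apply: iff_trans (c3LP _ _ precE) _; rewrite /= !hg ltr_nat.
Qed.

Lemma copy_slice_card (A : fstr) (S : {set chains3}) i :
  is_copy A S -> #|slice S i| = #|slice [set: A] i|.
Proof.
case=> f [[f_inj [_ [fP _]]] ->]; rewrite -(card_imset _ f_inj).
apply: eq_card => z; apply/idP/imsetP.
  rewrite inE => /andP[/imsetP[x _ ->] pz]; by exists x; rewrite // !inE /= -fP.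
by case=> x; rewrite !inE => px ->; rewrite imset_f ?fP.
Qed.

Section Embeddings.
Variables (prec : nat -> nat -> Prop) (h : nat -> rat).
Hypothesis h_inj : injective h.
Hypothesis precE : forall a b, prec a b <-> (h a < h b)%R.
Variables (A : fstr) (fA : A -> 'I_3 * nat).
Hypothesis fA_emb : emb_C3 prec fA.

Lemma emb_into_chains3 (f : A -> chains3) :
  (forall x, part (f x) = (fA x).1) ->
  (forall x y, (fA x).1 = (fA y).1 -> (pos (f x) < pos (f y)) = (h (fA x).2 < h (fA y).2)%R) ->
  is_emb f.
Proof.
move=> part_f pos_f.
split=> [x y e|].
  have ep : (fA x).1 = (fA y).1 by rewrite -!part_f e.
  apply: (age_key_inj h_inj fA_emb (age_slice fA_emb x)); first by rewrite ep (age_slice fA_emb).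
  case: (ltgtP (h (fA x).2) (h (fA y).2)) => // lt.
    by move: (pos_f x y ep); rewrite e lt ltnn.
  by move: (pos_f y x (esym ep)); rewrite e lt ltnn.
split=> [x y|]; first by rewrite /= !part_f (age_relE fA_emb).
split=> [i x|x y]; first by rewrite /= part_f (age_relP fA_emb).
rewrite /= !part_f (age_relL precE fA_emb); case: eqP => //= ep.
by rewrite pos_f.
Qed.

(* A subset of chains3 with the part sizes of A is a copy of A: match
   elements of equal rank in corresponding parts. *)
Lemma copy_of_slices (S : {set chains3}) :
  (forall i, #|slice S i| = #|slice [set: A] i|) -> is_copy A S.
Proof.
move=> cardS.
pose keyA x := h (fA x).2.
pose rkA i := chain_rank keyA (slice [set: A] i).
pose rkS i := chain_rank pos (slice S i).
have keyA_inj i : {in slice [set: A] i &, injective keyA} := age_key_inj h_inj fA_emb (i := i).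
have pos_inj i : {in slice S i &, injective pos}.
  move=> z w; rewrite !inE => /andP[_ /eqP pz] /andP[_ /eqP pw] e.
  by apply: part_pos_inj; rewrite /= pz pw e.
have rkA_lt i : {in slice [set: A] i &, forall x y, (rkA i x < rkA i y) = (keyA x < keyA y)%R}.
  exact: chain_rank_lt.
have rkS_lt i : {in slice S i &, forall z w, (rkS i z < rkS i w) = (pos z < pos w)}.
  exact: chain_rank_lt.
have match_rank x : exists z, z \in slice S (fA x).1 /\ rkS (fA x).1 z = rkA (fA x).1 x.
  have := chain_rank_bound keyA (age_slice fA_emb x).
  by rewrite -cardS => /(chain_rank_onto (pos_inj _)) [z zS ez]; exists z.
have [f Hf] := fin_all_exists match_rank.
have fS x : f x \in S /\ part (f x) = (fA x).1.
  by case: (Hf x); rewrite inE => /andP[-> /eqP].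
exists f; split.
  apply: emb_into_chains3 => [x|x y e]; first by case: (fS x).
  have yA : y \in slice [set: A] (fA x).1 by rewrite e (age_slice fA_emb).
  case: (Hf x) (Hf y) => fxS rx []; rewrite -e => fyS ry.
  by rewrite -(rkS_lt (fA x).1) // rx ry (rkA_lt (fA x).1) // (age_slice fA_emb).
apply/setP => z; apply/idP/imsetP => [zS|[x _ ->]]; last by case: (fS x).
have zP : z \in slice S (part z) by rewrite inE zS /= eqxx.
have := chain_rank_bound pos zP; rewrite cardS.
case/(chain_rank_onto (keyA_inj _)) => x xP rx; exists x => //.
move: xP; rewrite !inE /= (age_relP fA_emb) => /eqP ex.
case: (Hf x); rewrite ex => fxP efx.
apply/esym/(chain_rank_inj (pos_inj _) fxP zP); exact: etrans efx rx.
Qed.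

End Embeddings.
End ThreeChains.

Definition i0 : 'I_3 := @Ordinal 3 0 isT.
Definition i1 : 'I_3 := @Ordinal 3 1 isT.
Definition i2 : 'I_3 := @Ordinal 3 2 isT.

Lemma ord3P (i : 'I_3) : [\/ i = i0, i = i1 | i = i2].
Proof. by case: i => [[|[|[|m]]] lt_i3]; do ?[by constructor; apply: val_inj]. Qed.

Section TriChains.
Variables n0 n1 n2 : nat.

Definition tri : finType := ('I_n0 + 'I_n1 + 'I_n2)%type.

Definition in0 (y : 'I_n0) : tri := inl (inl y).
Definition in1 (y : 'I_n1) : tri := inl (inr y).
Definition in2 (y : 'I_n2) : tri := inr y.

Definition tri_part (z : tri) : 'I_3 :=
  match z with inl (inl _) => i0 | inl (inr _) => i1 | inr _ => i2 end.
Definition tri_pos (z : tri) : nat :=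
  match z with inl (inl y) => y | inl (inr y) => y | inr y => y end.

Lemma tri_part_pos_inj : injective (fun z => (tri_part z, tri_pos z)).
Proof. by case=> [[a|a]|a] [[b|b]|b] //= [/val_inj ->]. Qed.

Definition Ctri : fstr := chains3 tri_part tri_pos.

Definition glue (X0 : {set 'I_n0}) (X1 : {set 'I_n1}) (X2 : {set 'I_n2}) : {set tri} :=
  [set z | match z with
           | inl (inl y) => y \in X0 | inl (inr y) => y \in X1 | inr y => y \in X2 end].

Lemma glue_preim (S : {set tri}) : S = glue (in0 @^-1: S) (in1 @^-1: S) (in2 @^-1: S).
Proof. by apply/setP => -[[y|y]|y]; rewrite !inE. Qed.

Lemma preim_glue X0 X1 X2 :
  [/\ in0 @^-1: glue X0 X1 X2 = X0, in1 @^-1: glue X0 X1 X2 = X1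
    & in2 @^-1: glue X0 X1 X2 = X2].
Proof. by split; apply/setP => y; rewrite !inE. Qed.

Lemma card_slices (S : {set Ctri}) :
  [/\ #|slice S i0| = #|in0 @^-1: S|, #|slice S i1| = #|in1 @^-1: S|
    & #|slice S i2| = #|in2 @^-1: S|].
Proof.
have inj0 : injective in0 by move=> y w [].
have inj1 : injective in1 by move=> y w [].
have inj2 : injective in2 by move=> y w [].
split; [rewrite -(card_imset _ inj0)|rewrite -(card_imset _ inj1)
        |rewrite -(card_imset _ inj2)]; apply: eq_card => -[[y|y]|y]; rewrite !inE [relP _ _]/=.
all: try by rewrite andbT (mem_imset _ _ inj0, mem_imset _ _ inj1, mem_imset _ _ inj2) inE.
all: by rewrite andbF; apply/esym/negbTE/imsetP => -[w _ /(congr1 (val \o tri_part))].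
Qed.

End TriChains.

Lemma tri_ramsey (T : finType) (a b : 'I_3 -> nat) : exists n0 n1 n2,
  forall c : {set Ctri n0 n1 n2} -> T,
  exists2 B : {set Ctri n0 n1 n2}, (forall i, #|slice B i| = b i) &
    exists t, forall S : {set Ctri n0 n1 n2}, S \subset B ->
      (forall i, #|slice S i| = a i) -> c S = t.
Proof.
have [n0 [n1 [n2 HR]]] := product_ramsey T (a i0) (a i1) (a i2) (b i0) (b i1) (b i2).
exists n0, n1, n2 => c.
have [Y0 [Y1 [Y2 [cY0 cY1 cY2 [t Ht]]]]] := HR (fun X0 X1 X2 => c (glue X0 X1 X2)).
have [g0 g1 g2] := preim_glue Y0 Y1 Y2.
exists (glue Y0 Y1 Y2).
  have [s0 s1 s2] := card_slices (glue Y0 Y1 Y2).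
  by move=> i; case: (ord3P i) => ->; rewrite ?s0 ?g0 ?s1 ?g1 ?s2 ?g2.
exists t => S sSB cS; have [s0 s1 s2] := card_slices S.
rewrite (glue_preim S) Ht // -?s0 -?s1 -?s2 ?cS //.
- by rewrite -g0 preimsetS.
- by rewrite -g1 preimsetS.
- by rewrite -g2 preimsetS.
Qed.

(* Given A, B in the age, Ctri for the partwise Ramsey bounds of the part
   sizes of A and B works: the homogeneous B' is a copy of B, and copies of A
   inside B' are exactly its subsets with the part sizes of A. *)
Theorem theorem5p5 (prec : nat -> nat -> Prop) (Hprec : iso_to_Q prec) :
  ramsey_property (age_C3 prec).
Proof.
move=> k _ A B _ [fB fB_emb].
have [h [[h' hK _] precE]] := Hprec.
have [n0 [n1 [n2 HR]]] :=
  tri_ramsey 'I_k (fun i => #|slice [set: A] i|) (fun i => #|slice [set: B] i|).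
have tri_inj := @tri_part_pos_inj n0 n1 n2.
exists (Ctri n0 n1 n2); split; first exact: (chains3_in_age tri_inj Hprec).
move=> c; have [B' cardB' [t Ht]] := HR c.
exists B'; split.
  exact: (copy_of_slices tri_inj (can_inj hK) precE fB_emb cardB').
move=> S1 S2 copy1 sub1 copy2 sub2.
by rewrite !Ht // => i; apply: copy_slice_card.
Qed.
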